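(* Let $D\subset S^2$ be a convex body of constant diameter $\delta$. Then every two diametral chords of $D$ intersect.
   Context: $S^2$ is the unit sphere in $E^3$; for non-antipodal points $a,b$, the arc $ab$ is the shorter great-circle arc joining them and $|ab|$ is its length. A set containing no pair of antipodes is convex if it contains the arc joining any two of its points; a closed convex set with non-empty interior is a convex body. If $D$ has diameter $\delta$, an arc $pq$ with $p,q\in D$ and $|pq|=\delta$ is called a diametral chord of $D$. $D$ is of constant diameter $\delta$ if for every $p\in\mathrm{bd}(D)$ there exists $p'\in\mathrm{bd}(D)$ with $|pp'|=\delta$. *)

From Stdlib Require Import Reals Lra.
Open Scope R_scope.

Record pt := Pt { px : R; py : R; pz : R }.

Definition dot (a b : pt) : R := px a * px b + py a * py b + pz a * pz b.
Definition padd (a b : pt) : pt := Pt (px a + px b) (py a + py b) (pz a + pz b).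
Definition pscale (t : R) (a : pt) : pt := Pt (t * px a) (t * py a) (t * pz a).
Definition popp (a : pt) : pt := Pt (- px a) (- py a) (- pz a).
Definition edist (a b : pt) : R :=
  sqrt ((px a - px b)^2 + (py a - py b)^2 + (pz a - pz b)^2).

Definition S2 (a : pt) : Prop := dot a a = 1.

Definition sdist (a b : pt) : R := acos (dot a b).

Definition antipodal (a b : pt) : Prop := b = popp a.

(* The (shorter) great-circle arc ab, for non-antipodal a b on S^2:
   the points of S^2 lying in the cone spanned by a and b. *)
Definition arc (a b : pt) (x : pt) : Prop :=
  S2 x /\ exists al be : R, 0 <= al /\ 0 <= be /\ x = padd (pscale al a) (pscale be b).

Definition subS2 (D : pt -> Prop) : Prop := forall x, D x -> S2 x.

Definition sconvex (D : pt -> Prop) : Prop :=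
  subS2 D /\
  (forall a b, D a -> D b -> ~ antipodal a b) /\
  (forall a b x, D a -> D b -> arc a b x -> D x).

Definition sclosed (D : pt -> Prop) : Prop :=
  forall q, S2 q -> (forall eps, 0 < eps -> exists p, D p /\ edist p q < eps) -> D q.

Definition sinterior (D : pt -> Prop) (p : pt) : Prop :=
  D p /\ exists eps, 0 < eps /\ forall q, S2 q -> edist p q < eps -> D q.

Definition sboundary (D : pt -> Prop) (p : pt) : Prop :=
  D p /\ ~ sinterior D p.

Definition convex_body (D : pt -> Prop) : Prop :=
  sconvex D /\ sclosed D /\ exists p, sinterior D p.

Definition has_diameter (D : pt -> Prop) (delta : R) : Prop :=
  is_lub (fun d => exists p q, D p /\ D q /\ d = sdist p q) delta.

Definition constant_diameter (D : pt -> Prop) (delta : R) : Prop :=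
  has_diameter D delta /\
  forall p, sboundary D p -> exists p', sboundary D p' /\ sdist p p' = delta.

Definition diametral_chord (D : pt -> Prop) (delta : R) (p q : pt) : Prop :=
  D p /\ D q /\ sdist p q = delta.

From Stdlib Require Import Reals Lra Psatz.
Open Scope R_scope.

(* Only two properties of D are used: D is spherically convex (hence free of antipodal
   pairs), and no two of its points are more than delta apart.  Points are vectors of E^3,
   and the triple product [a, b, c] tells on which side of the great circle through a, b
   the point c lies.  For diametral chords pq and uv (with delta > 0):
   - if u, v lie weakly on opposite sides of the great circle of pq, the arc uv crosses
     that circle at a point x of D; a point of D on the great circle of a diametral chord
     lies on the chord itself (a point beyond an endpoint would be too far from the other
     endpoint, or antipodal to a point of D), so x lies on both arcs; likewise with the
     roles of the chords exchanged;
   - otherwise p, q, v, u (suitably relabelled) form a convex quadrilateral whose diagonals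
     pu, qv cross at some o, and the strict triangle inequality gives
     2 delta = |pq| + |uv| < |po| + |oq| + |uo| + |ov| = |pu| + |qv| <= 2 delta;
   - if delta = 0, D is a single point. *)

Definition det3 (a b c : pt) : R :=
  px a * (py b * pz c - pz b * py c) - py a * (px b * pz c - pz b * px c)
  + pz a * (px b * py c - py b * px c).

Definition lincomb (al : R) (a : pt) (be : R) (b : pt) : pt :=
  padd (pscale al a) (pscale be b).

Definition normalize (w : pt) : pt := pscale (/ sqrt (dot w w)) w.

Lemma pt_eq (a b : pt) : px a = px b -> py a = py b -> pz a = pz b -> a = b.
Proof. destruct a, b; simpl; intros; subst; reflexivity. Qed.

Lemma dot_comm (a b : pt) : dot a b = dot b a.
Proof. unfold dot; ring. Qed.

Lemma dot_lincomb_l (al be : R) (a b c : pt) :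
  dot (lincomb al a be b) c = al * dot a c + be * dot b c.
Proof. unfold dot, lincomb; simpl; ring. Qed.

Lemma dot_lincomb_r (al be : R) (a b c : pt) :
  dot c (lincomb al a be b) = al * dot c a + be * dot c b.
Proof. unfold dot, lincomb; simpl; ring. Qed.

Lemma lincomb_comm (al be : R) (a b : pt) : lincomb al a be b = lincomb be b al a.
Proof. apply pt_eq; unfold lincomb; simpl; ring. Qed.

Lemma dot_lincomb_self (al be : R) (a b : pt) : S2 a -> S2 b ->
  dot (lincomb al a be b) (lincomb al a be b) = al * al + be * be + 2 * al * be * dot a b.
Proof.
  intros Ha Hb; rewrite dot_lincomb_l, !dot_lincomb_r, (dot_comm b a).
  unfold S2 in Ha, Hb; rewrite Ha, Hb; ring.
Qed.

Lemma det3_scale_r (p q a : pt) (t : R) : det3 p q (pscale t a) = t * det3 p q a.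
Proof. unfold det3; simpl; ring. Qed.

Lemma det3_lincomb_r (p q : pt) (al be : R) (a b : pt) :
  det3 p q (lincomb al a be b) = al * det3 p q a + be * det3 p q b.
Proof. unfold det3, lincomb; simpl; ring. Qed.

(* Lagrange's decomposition of x along p, q and the normal p x q. *)
Lemma lagrange_decomposition (p q x : pt) :
  pscale (dot p p * dot q q - dot p q ^ 2) x =
  padd (lincomb (dot x p * dot q q - dot x q * dot p q) p
                (dot x q * dot p p - dot x p * dot p q) q)
       (pscale (det3 p q x) (Pt (py p * pz q - pz p * py q) (pz p * px q - px p * pz q)
                                (px p * py q - py p * px q))).
Proof. apply pt_eq; unfold dot, det3, lincomb; simpl; ring. Qed.

Lemma coplanar_lincomb (p q x : pt) : S2 p -> S2 q -> -1 < dot p q < 1 ->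
  det3 p q x = 0 ->
  x = lincomb ((dot x p - dot x q * dot p q) / (1 - dot p q ^ 2)) p
              ((dot x q - dot x p * dot p q) / (1 - dot p q ^ 2)) q.
Proof.
  intros Hp Hq Hk Hd.
  pose proof (lagrange_decomposition p q x) as E; unfold S2 in Hp, Hq.
  rewrite Hp, Hq, Hd in E; set (k := dot p q) in *.
  assert (Hk2 : 1 - k ^ 2 <> 0) by nra.
  assert (Hk2' : 1 - k * k <> 0) by nra.
  pose proof (f_equal px E) as Ex; pose proof (f_equal py E) as Ey;
    pose proof (f_equal pz E) as Ez; unfold lincomb in Ex, Ey, Ez; simpl in Ex, Ey, Ez.
  assert (Solve : forall y z, (1 * 1 - k * (k * 1)) * y = z -> y = z / (1 - k ^ 2))
    by (intros y z <-; field; exact Hk2).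
  apply pt_eq; unfold lincomb; simpl;
    [rewrite (Solve _ _ Ex) | rewrite (Solve _ _ Ey) | rewrite (Solve _ _ Ez)];
    field; assumption.
Qed.

Lemma dot_dist_sq (a b : pt) : S2 a -> S2 b ->
  (px a - px b) ^ 2 + (py a - py b) ^ 2 + (pz a - pz b) ^ 2 = 2 - 2 * dot a b /\
  (px a + px b) ^ 2 + (py a + py b) ^ 2 + (pz a + pz b) ^ 2 = 2 + 2 * dot a b.
Proof.
  unfold S2; intros Ha Hb; split.
  - transitivity (dot a a + dot b b - 2 * dot a b); [unfold dot; ring | rewrite Ha, Hb; ring].
  - transitivity (dot a a + dot b b + 2 * dot a b); [unfold dot; ring | rewrite Ha, Hb; ring].
Qed.

Lemma sum_sq_nonneg (x y z : R) : 0 <= x ^ 2 + y ^ 2 + z ^ 2.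
Proof. pose proof (pow2_ge_0 x); pose proof (pow2_ge_0 y); pose proof (pow2_ge_0 z); lra. Qed.

Lemma sum_sq_eq0 (x y z : R) : x ^ 2 + y ^ 2 + z ^ 2 = 0 -> x = 0 /\ y = 0 /\ z = 0.
Proof.
  intros H; pose proof (pow2_ge_0 x); pose proof (pow2_ge_0 y); pose proof (pow2_ge_0 z).
  repeat split; apply Rsqr_0_uniq; unfold Rsqr; nra.
Qed.

Lemma dot_bounds (a b : pt) : S2 a -> S2 b -> -1 <= dot a b <= 1.
Proof.
  intros Ha Hb; destruct (dot_dist_sq a b Ha Hb) as [Hd Hs].
  pose proof (sum_sq_nonneg (px a - px b) (py a - py b) (pz a - pz b)).
  pose proof (sum_sq_nonneg (px a + px b) (py a + py b) (pz a + pz b)); lra.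
Qed.

Lemma dot_eq_1 (a b : pt) : S2 a -> S2 b -> dot a b = 1 -> a = b.
Proof.
  intros Ha Hb E; destruct (dot_dist_sq a b Ha Hb) as [Hd _].
  destruct (sum_sq_eq0 (px a - px b) (py a - py b) (pz a - pz b)) as [? [? ?]]; [lra|].
  apply pt_eq; lra.
Qed.

Lemma dot_eq_m1 (a b : pt) : S2 a -> S2 b -> dot a b = -1 -> antipodal a b.
Proof.
  intros Ha Hb E; destruct (dot_dist_sq a b Ha Hb) as [_ Hs].
  destruct (sum_sq_eq0 (px a + px b) (py a + py b) (pz a + pz b)) as [? [? ?]]; [lra|].
  unfold antipodal, popp; apply pt_eq; simpl; lra.
Qed.

Lemma dot_lt_1 (a b : pt) : S2 a -> S2 b -> a <> b -> dot a b < 1.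
Proof.
  intros Ha Hb Hne; destruct (dot_bounds a b Ha Hb) as [_ [Hlt | Heq]]; [exact Hlt|].
  exfalso; exact (Hne (dot_eq_1 a b Ha Hb Heq)).
Qed.

Lemma lincomb_nonzero (al be : R) (a b : pt) : S2 a -> S2 b -> -1 < dot a b ->
  0 <= al -> 0 <= be -> 0 < al + be -> 0 < dot (lincomb al a be b) (lincomb al a be b).
Proof.
  intros Ha Hb Hk Hal Hbe Hs; rewrite dot_lincomb_self by assumption.
  assert (0 <= al * be * (1 + dot a b)) by (apply Rmult_le_pos; nra).
  destruct (Req_dec al be) as [E | E].
  - subst be; assert (0 < al * al * (1 + dot a b)) by (apply Rmult_lt_0_compat; nra); nra.
  - assert (0 < (al - be) * (al - be)) by (apply Rsqr_pos_lt; lra); nra.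
Qed.

Lemma normalize_lincomb (al be : R) (a b : pt) :
  normalize (lincomb al a be b) =
  lincomb (al / sqrt (dot (lincomb al a be b) (lincomb al a be b))) a
          (be / sqrt (dot (lincomb al a be b) (lincomb al a be b))) b.
Proof. unfold normalize; apply pt_eq; unfold lincomb; simpl; unfold Rdiv; ring. Qed.

Lemma normalize_S2 (w : pt) : 0 < dot w w -> S2 (normalize w).
Proof.
  intros Hw; unfold S2, normalize.
  assert (Hs : 0 < sqrt (dot w w)) by (apply sqrt_lt_R0; assumption).
  assert (E : forall t, dot (pscale t w) (pscale t w) = t * t * dot w w)
    by (intros; unfold dot; simpl; ring).
  rewrite E; set (s := sqrt (dot w w)) in *.
  rewrite <- (sqrt_sqrt (dot w w)) by lra; fold s; field; lra.
Qed.

Lemma det3_normalize_mid (a w b : pt) : 0 < dot w w ->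
  det3 a w b <> 0 -> det3 a (normalize w) b <> 0.
Proof.
  intros Hw Hd; unfold normalize.
  assert (Hs : 0 < sqrt (dot w w)) by (apply sqrt_lt_R0; assumption).
  replace (det3 a (pscale (/ sqrt (dot w w)) w) b) with (/ sqrt (dot w w) * det3 a w b)
    by (unfold det3; simpl; ring).
  apply Rmult_integral_contrapositive_currified; [apply Rinv_neq_0_compat; lra | exact Hd].
Qed.

Lemma arc_left (a b : pt) : S2 a -> arc a b a.
Proof.
  intros Ha; split; [exact Ha|]; exists 1, 0; split; [lra | split; [lra|]].
  apply pt_eq; simpl; ring.
Qed.

Lemma arc_normalize (a b : pt) (al be : R) : S2 a -> S2 b -> -1 < dot a b ->
  0 <= al -> 0 <= be -> 0 < al + be -> arc a b (normalize (lincomb al a be b)).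
Proof.
  intros Ha Hb Hk Hal Hbe Hs.
  pose proof (lincomb_nonzero al be a b Ha Hb Hk Hal Hbe Hs) as Hw.
  split; [apply normalize_S2; exact Hw|].
  assert (HN : 0 < / sqrt (dot (lincomb al a be b) (lincomb al a be b)))
    by (apply Rinv_0_lt_compat, sqrt_lt_R0; exact Hw).
  rewrite normalize_lincomb; unfold Rdiv.
  do 2 eexists; split; [|split; [|reflexivity]]; apply Rmult_le_pos; lra.
Qed.

Lemma arc_meets_plane (p q u v : pt) : S2 u -> S2 v -> -1 < dot u v ->
  det3 p q u * det3 p q v <= 0 -> exists x, arc u v x /\ det3 p q x = 0.
Proof.
  intros Hu Hv Hk Hs.
  destruct (Req_dec (det3 p q u) 0) as [Hu0 | Hu0]; [exists u; split; [apply arc_left|]; assumption|].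
  set (s1 := det3 p q u) in *; set (s2 := det3 p q v) in *.
  (* The weights |s2|, |s1| make the triple products of u and v cancel. *)
  assert (Hs1 : 0 < Rabs s1) by (apply Rabs_pos_lt; exact Hu0).
  pose proof (Rabs_pos s2) as Hs2.
  exists (normalize (lincomb (Rabs s2) u (Rabs s1) v)); split.
  - apply arc_normalize; try assumption; lra.
  - unfold normalize; rewrite det3_scale_r, det3_lincomb_r; fold s1 s2.
    replace (Rabs s2 * s1 + Rabs s1 * s2) with 0; [ring|].
    destruct (Rcase_abs s1) as [H1 | H1];
      [rewrite (Rabs_left s1 H1) | rewrite (Rabs_right s1 H1)];
      (destruct (Rcase_abs s2) as [H2 | H2];
      [rewrite (Rabs_left s2 H2) | rewrite (Rabs_right s2 H2)]); nra.
Qed.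

Lemma acos_antitone (x y : R) : -1 <= x -> x <= y -> y <= 1 -> acos y <= acos x.
Proof.
  intros Hx Hxy Hy; destruct (Rle_or_lt (acos y) (acos x)) as [|Hlt]; [assumption|].
  pose proof (acos_bound x); pose proof (acos_bound y).
  assert (C : cos (acos y) < cos (acos x)) by (apply cos_decreasing_1; lra).
  rewrite !cos_acos in C by lra; lra.
Qed.

Lemma acos_le_rev (x y : R) : -1 <= x <= 1 -> -1 <= y <= 1 -> acos x <= acos y -> y <= x.
Proof.
  intros Hx Hy Hle; pose proof (acos_bound x); pose proof (acos_bound y).
  rewrite <- (cos_acos x), <- (cos_acos y) by lra; apply cos_decr_1; lra.
Qed.

Lemma sdist_comm (a b : pt) : sdist a b = sdist b a.
Proof. unfold sdist; rewrite dot_comm; reflexivity. Qed.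

Lemma sdist_refl (a : pt) : S2 a -> sdist a a = 0.
Proof. unfold sdist, S2; intros ->; apply acos_1. Qed.

Lemma sdist_eq_0 (a b : pt) : S2 a -> S2 b -> sdist a b = 0 -> a = b.
Proof.
  unfold sdist; intros Ha Hb E; apply dot_eq_1; try assumption.
  rewrite <- (cos_acos (dot a b)), E by (apply dot_bounds; assumption); apply cos_0.
Qed.

(* Addition formula for arccosines, with the sines sx, sy given explicitly;
   the condition x + y >= 0 says acos x + acos y <= PI. *)
Lemma acos_add (x y sx sy : R) : 0 <= sx -> 0 <= sy ->
  sx * sx = 1 - x * x -> sy * sy = 1 - y * y -> 0 <= x + y ->
  acos x + acos y = acos (x * y - sx * sy).
Proof.
  intros Hsx Hsy Ex Ey Hxy.
  assert (Bx : -1 <= x <= 1) by nra; assert (By : -1 <= y <= 1) by nra.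
  assert (Sx : sin (acos x) = sx)
    by (rewrite sin_acos by lra; apply sqrt_lem_1; unfold Rsqr; nra).
  assert (Sy : sin (acos y) = sy)
    by (rewrite sin_acos by lra; apply sqrt_lem_1; unfold Rsqr; nra).
  assert (Hle : acos x <= acos (- y)) by (apply acos_antitone; lra).
  rewrite acos_opp in Hle; pose proof (acos_bound x); pose proof (acos_bound y).
  rewrite <- (acos_cos (acos x + acos y)) by lra.
  rewrite cos_plus, !cos_acos, Sx, Sy by lra; reflexivity.
Qed.

Lemma sdist_split (a c : pt) (al be : R) : S2 a -> S2 c -> -1 < dot a c -> 0 < al -> 0 < be ->
  sdist a (normalize (lincomb al a be c)) + sdist (normalize (lincomb al a be c)) c
  = sdist a c.
Proof.
  intros Ha Hc Hk Hal Hbe.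
  pose proof (dot_bounds a c Ha Hc) as Bk.
  pose proof (lincomb_nonzero al be a c Ha Hc Hk ltac:(lra) ltac:(lra) ltac:(lra)) as Hw.
  pose proof (dot_lincomb_self al be a c Ha Hc) as Ew.
  (* With N = |al a + be c|, k = a.c and S = sqrt (1 - k^2), the point o has
     a.o = (al + be k)/N and o.c = (al k + be)/N, whose sines are be S/N and al S/N. *)
  rewrite normalize_lincomb; unfold sdist.
  assert (HN : 0 < sqrt (dot (lincomb al a be c) (lincomb al a be c)))
    by (apply sqrt_lt_R0; exact Hw).
  assert (HNN : sqrt (dot (lincomb al a be c) (lincomb al a be c))
                * sqrt (dot (lincomb al a be c) (lincomb al a be c))
                = al * al + be * be + 2 * al * be * dot a c)
    by (rewrite sqrt_sqrt; lra).
  set (N := sqrt (dot (lincomb al a be c) (lincomb al a be c))) in *; clearbody N.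
  rewrite dot_lincomb_l, dot_lincomb_r; unfold S2 in Ha, Hc; rewrite Ha, Hc.
  set (k := dot a c) in *.
  assert (HS : 0 <= sqrt (1 - k * k)) by apply sqrt_pos.
  assert (HSS : sqrt (1 - k * k) * sqrt (1 - k * k) = 1 - k * k) by (apply sqrt_sqrt; nra).
  set (S := sqrt (1 - k * k)) in *; clearbody S.
  rewrite (acos_add _ _ (be * S / N) (al * S / N)).
  - f_equal; field_simplify_eq; [|lra].
    replace (N ^ 2) with (N * N) by ring; replace (S ^ 2) with (S * S) by ring.
    rewrite HNN, HSS; ring.
  - apply Rmult_le_pos; [nra | left; apply Rinv_0_lt_compat; exact HN].
  - apply Rmult_le_pos; [nra | left; apply Rinv_0_lt_compat; exact HN].
  - field_simplify_eq; [|lra]; replace (N ^ 2) with (N * N) by ring.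
    replace (S ^ 2) with (S * S) by ring; rewrite HNN, HSS; ring.
  - field_simplify_eq; [|lra]; replace (N ^ 2) with (N * N) by ring.
    replace (S ^ 2) with (S * S) by ring; rewrite HNN, HSS; ring.
  - replace (al / N * 1 + be / N * k + (al / N * k + be / N * 1))
      with ((al + be) * (1 + k) / N) by (field; lra).
    apply Rmult_le_pos; [nra | left; apply Rinv_0_lt_compat; exact HN].
Qed.

Lemma det3_sq_unit (a o b : pt) : S2 a -> S2 o -> S2 b ->
  det3 a o b ^ 2
  = (1 - dot a o ^ 2) * (1 - dot o b ^ 2) - (dot a b - dot a o * dot o b) ^ 2.
Proof.
  unfold S2; intros Ha Ho Hb.
  transitivity (dot a a * dot o o * dot b b + 2 * dot a o * dot o b * dot a b
    - dot a a * dot o b ^ 2 - dot o o * dot a b ^ 2 - dot b b * dot a o ^ 2).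
  - unfold det3, dot; ring.
  - rewrite Ha, Ho, Hb; ring.
Qed.

Lemma sdist_triangle_strict (a o b : pt) : S2 a -> S2 o -> S2 b -> det3 a o b <> 0 ->
  sdist a b < sdist a o + sdist o b.
Proof.
  intros Ha Ho Hb Hd; unfold sdist.
  pose proof (det3_sq_unit a o b Ha Ho Hb) as G.
  assert (Gp : 0 < Rsqr (det3 a o b)) by (apply Rsqr_pos_lt; exact Hd).
  rewrite Rsqr_pow2, G in Gp.
  pose proof (dot_bounds a o Ha Ho); pose proof (dot_bounds o b Ho Hb).
  pose proof (dot_bounds a b Ha Hb).
  set (x := dot a o) in *; set (y := dot o b) in *; set (z := dot a b) in *.
  (* Otherwise z <= x y - P with P = sqrt ((1 - x^2)(1 - y^2)), so (z - x y)^2 >= P^2,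
     contradicting the Gram identity. *)
  destruct (Rlt_or_le (acos z) (acos x + acos y)) as [|Hge]; [assumption | exfalso].
  pose proof (acos_bound x); pose proof (acos_bound y); pose proof (acos_bound z).
  assert (C : cos (acos z) <= cos (acos x + acos y)) by (apply cos_decr_1; lra).
  rewrite cos_plus, !cos_acos, !sin_acos in C by lra.
  assert (HP : 0 <= sqrt (1 - x²) * sqrt (1 - y²))
    by (apply Rmult_le_pos; apply sqrt_pos).
  assert (HPP : (sqrt (1 - x²) * sqrt (1 - y²)) ^ 2 = (1 - x ^ 2) * (1 - y ^ 2)).
  { rewrite Rpow_mult_distr, <- !Rsqr_pow2, !Rsqr_sqrt by (unfold Rsqr; nra).
    unfold Rsqr; ring. }
  set (P := sqrt (1 - x²) * sqrt (1 - y²)) in *.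
  assert (P ^ 2 <= (x * y - z) ^ 2) by (apply pow_incr; lra).
  replace ((z - x * y) ^ 2) with ((x * y - z) ^ 2) in Gp by ring.
  lra.
Qed.

(* Algebraic core of the fact that a chord cannot be extended inside D: on the great
   circle through unit vectors p, q with k = p.q, the point al p + be q (al < 0 < be)
   lies beyond q, so its inner product with p is smaller than k.  Proof: y = al + be k
   satisfies y^2 = 1 - be^2 (1 - k^2); if y >= k then k <= y < be k, and comparing be
   with 1 according to the sign of k shows y^2 and k^2 compare the wrong way. *)
Lemma dot_beyond_endpoint (al be k : R) : al < 0 -> 0 < be -> -1 < k < 1 ->
  al * al + be * be + 2 * al * be * k = 1 -> al + be * k < k.
Proof.
  intros Hal Hbe Hk E.
  set (y := al + be * k).
  assert (Ey : y * y = 1 - be * be * (1 - k * k)) by (unfold y; nra).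
  assert (Hk2 : 0 < 1 - k * k) by nra.
  destruct (Rlt_or_le y k) as [|Hyk]; [assumption | exfalso].
  assert (Hyb : y < be * k) by (unfold y; lra).
  destruct (Rtotal_order k 0) as [Hk0 | [Hk0 | Hk0]].
  - assert (Hb1 : be < 1) by nra.
    assert (0 < (1 - be * be) * (1 - k * k)) by (apply Rmult_lt_0_compat; nra).
    assert (be * k < 0) by nra.
    assert (y * y <= k * k).
    { replace (y * y) with (- y * - y) by ring; replace (k * k) with (- k * - k) by ring.
      apply Rmult_le_compat; lra. }
    lra.
  - subst k; lra.
  - assert (Hb1 : 1 < be) by nra.
    assert (0 < (be * be - 1) * (1 - k * k)) by (apply Rmult_lt_0_compat; nra).
    assert (k * k <= y * y) by (apply Rmult_le_compat; lra).
    lra.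
Qed.

Lemma prod_pos_cases (a b : R) : 0 < a * b -> (0 < a /\ 0 < b) \/ (0 < - a /\ 0 < - b).
Proof.
  intros H; destruct (Rlt_or_le 0 a), (Rlt_or_le 0 b);
    [left; split | exfalso | exfalso | right; split]; nra.
Qed.

Section ConvexSetOfBoundedDiameter.

Variable D : pt -> Prop.
Variable delta : R.
Hypothesis D_convex : sconvex D.
Hypothesis D_diameter : forall a b, D a -> D b -> sdist a b <= delta.

Lemma in_S2 (a : pt) : D a -> S2 a.
Proof. destruct D_convex as [Hsub _]; exact (Hsub a). Qed.

Lemma D_arc (a b x : pt) : D a -> D b -> arc a b x -> D x.
Proof. destruct D_convex as [_ [_ Harc]]; exact (Harc a b x). Qed.

Lemma dot_gt_m1 (a b : pt) : D a -> D b -> -1 < dot a b.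
Proof.
  intros Ha Hb; destruct (dot_bounds a b (in_S2 a Ha) (in_S2 b Hb)) as [[Hlt | Heq] _];
    [exact Hlt | exfalso].
  destruct D_convex as [_ [Hanti _]].
  exact (Hanti a b Ha Hb (dot_eq_m1 a b (in_S2 a Ha) (in_S2 b Hb) (eq_sym Heq))).
Qed.

(* If pq is a diametral chord, no point x = al p + be q (al < 0 <= be) of its great
   circle lying beyond q belongs to D: it would be farther than delta from p, or
   antipodal to p. *)
Lemma no_point_beyond (p q x : pt) (al be : R) : D p -> D q -> D x -> p <> q ->
  sdist p q = delta -> x = lincomb al p be q -> al < 0 -> 0 <= be -> False.
Proof.
  intros Hp Hq Hx Hne Hpq Ex Hal Hbe.
  pose proof (in_S2 p Hp) as Sp; pose proof (in_S2 q Hq) as Sq; pose proof (in_S2 x Hx) as Sx.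
  assert (Hk : -1 < dot p q < 1) by (split; [apply dot_gt_m1 | apply dot_lt_1]; assumption).
  assert (Ew : al * al + be * be + 2 * al * be * dot p q = 1).
  { rewrite <- (dot_lincomb_self al be p q Sp Sq), <- Ex; exact Sx. }
  destruct Hbe as [Hbe | <-].
  - assert (Epx : dot p x = al + be * dot p q).
    { rewrite Ex, dot_lincomb_r; unfold S2 in Sp; rewrite Sp; ring. }
    pose proof (dot_beyond_endpoint al be (dot p q) Hal Hbe Hk Ew) as Hfar.
    pose proof (D_diameter p x Hp Hx) as Hle; rewrite <- Hpq in Hle; unfold sdist in Hle.
    apply acos_le_rev in Hle; try (apply dot_bounds; assumption); lra.
  - assert (Hal1 : al = -1) by nra; subst al.
    destruct D_convex as [_ [Hanti _]]; apply (Hanti p x Hp Hx).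
    unfold antipodal; rewrite Ex; apply pt_eq; unfold lincomb; simpl; ring.
Qed.

Lemma coplanar_point_on_chord (p q x : pt) : D p -> D q -> D x -> p <> q ->
  sdist p q = delta -> det3 p q x = 0 -> arc p q x.
Proof.
  intros Hp Hq Hx Hne Hpq Hd.
  pose proof (in_S2 p Hp) as Sp; pose proof (in_S2 q Hq) as Sq; pose proof (in_S2 x Hx) as Sx.
  assert (Hk : -1 < dot p q < 1) by (split; [apply dot_gt_m1 | apply dot_lt_1]; assumption).
  pose proof (coplanar_lincomb p q x Sp Sq Hk Hd) as Ex.
  set (al := (dot x p - dot x q * dot p q) / (1 - dot p q ^ 2)) in Ex.
  set (be := (dot x q - dot x p * dot p q) / (1 - dot p q ^ 2)) in Ex.
  clearbody al be.
  destruct (Rle_or_lt 0 al) as [Hal | Hal]; destruct (Rle_or_lt 0 be) as [Hbe | Hbe].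
  - split; [exact Sx | exists al, be; auto].
  - exfalso; apply (no_point_beyond q p x be al); auto.
    + rewrite sdist_comm; exact Hpq.
    + rewrite lincomb_comm; exact Ex.
  - exfalso; apply (no_point_beyond p q x al be); auto; lra.
  - exfalso; destruct D_convex as [_ [Hanti _]]; apply (Hanti x (popp x) Hx); [|reflexivity].
    apply (D_arc p q); auto; split.
    + unfold S2, dot, popp in *; simpl; rewrite <- Sx; ring.
    + exists (- al), (- be); split; [lra | split; [lra|]].
      rewrite Ex; apply pt_eq; unfold lincomb; simpl; ring.
Qed.

(* If u, v lie weakly on opposite sides of the great circle of a diametral chord pq,
   the arc uv crosses that circle inside D, hence on the arc pq. *)
Lemma separated_chords_meet (p q u v : pt) : D p -> D q -> D u -> D v -> p <> q ->
  sdist p q = delta -> det3 p q u * det3 p q v <= 0 -> exists x, arc p q x /\ arc u v x.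
Proof.
  intros Hp Hq Hu Hv Hne Hpq Hs.
  destruct (arc_meets_plane p q u v (in_S2 u Hu) (in_S2 v Hv) (dot_gt_m1 u v Hu Hv) Hs)
    as [x [Hx Hd]].
  exists x; split; [|exact Hx].
  apply coplanar_point_on_chord; auto; exact (D_arc u v x Hu Hv Hx).
Qed.

(* Diametral chords pq and uv cannot be opposite sides of a convex quadrilateral p q v u:
   its diagonals pu and qv would cross at a point o, and the strict triangle inequality in
   the triangles p o q and u o v would give 2 delta < |pu| + |qv| <= 2 delta. *)
Lemma no_convex_quadrilateral (p q u v : pt) : D p -> D q -> D u -> D v ->
  sdist p q = delta -> sdist u v = delta ->
  0 < det3 p q u -> 0 < det3 p q v -> 0 < det3 u v p -> 0 < det3 u v q -> False.
Proof.
  intros Hp Hq Hu Hv Hpq Huv Hs1 Hs2 Ht1 Ht2.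
  pose proof (in_S2 p Hp) as Sp; pose proof (in_S2 q Hq) as Sq.
  pose proof (in_S2 u Hu) as Su; pose proof (in_S2 v Hv) as Sv.
  set (s1 := det3 p q u) in *; set (s2 := det3 p q v) in *.
  set (t1 := det3 u v p) in *; set (t2 := det3 u v q) in *.
  (* The common point of the two diagonals. *)
  assert (Ediag : lincomb t2 p s2 u = lincomb t1 q s1 v)
    by (apply pt_eq; unfold lincomb, s1, s2, t1, t2, det3; simpl; ring).
  assert (Hw : 0 < dot (lincomb t2 p s2 u) (lincomb t2 p s2 u))
    by (apply lincomb_nonzero; try apply dot_gt_m1; auto; lra).
  pose proof (normalize_S2 _ Hw) as So.
  assert (Hpu := sdist_split p u t2 s2 Sp Su (dot_gt_m1 p u Hp Hu) Ht2 Hs2).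
  assert (Hqv := sdist_split q v t1 s1 Sq Sv (dot_gt_m1 q v Hq Hv) Ht1 Hs1).
  rewrite <- Ediag in Hqv.
  set (o := normalize (lincomb t2 p s2 u)) in *.
  assert (Tpq : sdist p q < sdist p o + sdist o q).
  { apply sdist_triangle_strict; auto; apply det3_normalize_mid; auto.
    replace (det3 p (lincomb t2 p s2 u) q) with (- (s2 * s1))
      by (unfold s1, s2, det3, lincomb; simpl; ring); nra. }
  assert (Tuv : sdist u v < sdist u o + sdist o v).
  { apply sdist_triangle_strict; auto; unfold o; rewrite Ediag; apply det3_normalize_mid.
    - rewrite <- Ediag; exact Hw.
    - replace (det3 u (lincomb t1 q s1 v) v) with (- (t1 * t2))
        by (unfold t1, t2, det3, lincomb; simpl; ring); nra. }
  pose proof (D_diameter p u Hp Hu); pose proof (D_diameter q v Hq Hv).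
  rewrite (sdist_comm o q) in Tpq; rewrite (sdist_comm u o) in Tuv; lra.
Qed.

Lemma one_sided_chords_absurd (p q u v : pt) : D p -> D q -> D u -> D v ->
  sdist p q = delta -> sdist u v = delta ->
  0 < det3 p q u * det3 p q v -> 0 < det3 u v p * det3 u v q -> False.
Proof.
  intros Hp Hq Hu Hv Hpq Huv Hs Ht.
  assert (Hqp : sdist q p = delta) by (rewrite sdist_comm; exact Hpq).
  assert (Hvu : sdist v u = delta) by (rewrite sdist_comm; exact Huv).
  assert (Swap : forall a b c, det3 b a c = - det3 a b c) by (intros; unfold det3; ring).
  destruct (prod_pos_cases _ _ Hs) as [[Hs1 Hs2] | [Hs1 Hs2]],
    (prod_pos_cases _ _ Ht) as [[Ht1 Ht2] | [Ht1 Ht2]].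
  - apply (no_convex_quadrilateral p q u v); assumption.
  - apply (no_convex_quadrilateral p q v u); first [assumption | rewrite Swap; assumption].
  - apply (no_convex_quadrilateral q p u v); first [assumption | rewrite Swap; assumption].
  - apply (no_convex_quadrilateral q p v u); first [assumption | rewrite Swap; assumption].
Qed.

Lemma diameter_zero_unique (a b : pt) : delta = 0 -> D a -> D b -> a = b.
Proof.
  intros H0 Ha Hb; apply sdist_eq_0; try apply in_S2; try assumption.
  pose proof (D_diameter a b Ha Hb); pose proof (acos_bound (dot a b)).
  unfold sdist in *; lra.
Qed.

Lemma diametral_chords_intersect (p q u v : pt) : D p -> D q -> D u -> D v ->
  sdist p q = delta -> sdist u v = delta -> exists x, arc p q x /\ arc u v x.
Proof.
  intros Hp Hq Hu Hv Hpq Huv.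
  destruct (Req_dec delta 0) as [H0 | H0].
  - rewrite <- (diameter_zero_unique p q), <- (diameter_zero_unique p u),
      <- (diameter_zero_unique p v) by assumption.
    exists p; split; apply arc_left, in_S2, Hp.
  - assert (Hne : forall a b, D a -> sdist a b = delta -> a <> b).
    { intros a b Ha Hab <-; rewrite sdist_refl in Hab by (apply in_S2, Ha); lra. }
    destruct (Rle_or_lt (det3 p q u * det3 p q v) 0) as [Hs | Hs].
    { apply separated_chords_meet; auto. }
    destruct (Rle_or_lt (det3 u v p * det3 u v q) 0) as [Ht | Ht].
    { destruct (separated_chords_meet u v p q) as [x [Hx1 Hx2]]; auto.
      exists x; split; assumption. }
    exfalso; exact (one_sided_chords_absurd p q u v Hp Hq Hu Hv Hpq Huv Hs Ht).
Qed.

End ConvexSetOfBoundedDiameter.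

Theorem proposition2 (D : pt -> Prop) (delta : R) :
  convex_body D -> constant_diameter D delta ->
  forall p q p' q' : pt,
    diametral_chord D delta p q -> diametral_chord D delta p' q' ->
    exists x, arc p q x /\ arc p' q' x.
Proof.
  intros [Hconv _] [[Hub _] _] p q p' q' [Hp [Hq Hpq]] [Hp' [Hq' Hpq']].
  assert (Hdiam : forall a b, D a -> D b -> sdist a b <= delta)
    by (intros a b Ha Hb; apply Hub; exists a, b; auto).
  exact (diametral_chords_intersect D delta Hconv Hdiam p q p' q' Hp Hq Hp' Hq' Hpq Hpq').
Qed.
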